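(* Let $G$ be a group and $\iota\in G$ an element for which there is a finite normal subgroup $L\lhd G$ such that the image of $\iota$ is central in $G/L$. Let $A$ and $B$ be $\mathbb{Q}[G]$-modules with $A$ gr-odd. If $B$ is gr-odd (resp. gr-even), then both $A\otimes_{\mathbb{Q}}B$ and $\mathrm{Hom}_{\mathbb{Q}}(A,B)$ are gr-even (resp. gr-odd). The analogous statement with $A$ gr-even also holds (i.e. if $A$ is gr-even, then $A\otimes_{\mathbb{Q}}B$ and $\mathrm{Hom}_{\mathbb{Q}}(A,B)$ are gr-odd if $B$ is gr-odd and gr-even if $B$ is gr-even).
   Context: $A\otimes_{\mathbb{Q}}B$ carries the diagonal $G$-action and $\mathrm{Hom}_{\mathbb{Q}}(A,B)$ the conjugation action. A $\mathbb{Q}[G]$-module $M$ is odd if $\iota\cdot m=-m$ for all $m$, even if $\iota\cdot m=m$ for all $m$; it is gr-odd (resp. gr-even) if it has a finite filtration by $\mathbb{Q}[G]$-submodules $0=F_{-1}M\subseteq\cdots\subseteq F_kM=M$ with all quotients $F_{i+1}M/F_iM$ odd (resp. even). *)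

From HB Require Import structures.
From mathcomp Require Import all_boot all_order all_algebra.
From mathcomp Require Import boolp functions.
Set Implicit Arguments. Unset Strict Implicit. Unset Printing Implicit Defensive.
Import GRing.Theory.
Local Open Scope ring_scope.

Record group := Group {
  gcar :> Type;
  gmul : gcar -> gcar -> gcar;
  ginv : gcar -> gcar;
  gone : gcar;
  gmulA : forall x y z, gmul x (gmul y z) = gmul (gmul x y) z;
  gmul1 : forall x, gmul gone x = x;
  gmulV : forall x, gmul (ginv x) x = gone
}.

Definition qlinear (U V : lmodType rat) (f : U -> V) : Prop :=
  forall (a : rat) (u v : U), f (a *: u + v) = a *: f u + f v.

Definition is_QGaction (G : group) (V : lmodType rat) (act : G -> V -> V) : Prop :=
  [/\ forall g, qlinear (act g),
      forall v, act (gone G) v = v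
    & forall g h v, act (gmul g h) v = act g (act h v)].

Definition is_QGsubmod (G : group) (V : lmodType rat) (act : G -> V -> V)
    (S : V -> Prop) : Prop :=
  [/\ S 0,
      forall u v, S u -> S v -> S (u + v),
      forall (a : rat) v, S v -> S (a *: v)
    & forall g v, S v -> S (act g v)].

(* The Q[G]-module M (a submodule of the ambient space V, e.g. M = V) is
   gr-odd (odd = true) / gr-even (odd = false) with respect to iota:
   there is a filtration 0 = F 0 <= F 1 <= ... <= F k = M by Q[G]-submodules
   (F (i+1) here is F_i of the paper, F 0 is F_{-1} = 0) such that iota acts
   by -1 (resp. +1) on every quotient F (i+1) / F i, i.e.
   iota.m + m \in F i (resp. iota.m - m \in F i) for all m \in F (i+1). *)
Definition gr_parity (G : group) (iota : G) (V : lmodType rat)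
    (act : G -> V -> V) (M : V -> Prop) (odd : bool) : Prop :=
  exists (k : nat) (F : nat -> V -> Prop),
    [/\ forall n, (n <= k)%N -> is_QGsubmod act (F n),
        forall v, F 0%N v <-> v = 0,
        forall n v, (n < k)%N -> F n v -> F n.+1 v,
        forall v, F k v <-> M v
      & forall n v, (n < k)%N -> F n.+1 v ->
          F n (act iota v + (if odd then v else - v))].

Definition gr_odd (G : group) (iota : G) (V : lmodType rat)
    (act : G -> V -> V) (M : V -> Prop) := gr_parity iota act M true.
Definition gr_even (G : group) (iota : G) (V : lmodType rat)
    (act : G -> V -> V) (M : V -> Prop) := gr_parity iota act M false.

Definition qbilinear (A B W : lmodType rat) (f : A -> B -> W) : Prop :=
  (forall a, qlinear (f a)) /\ (forall b, qlinear (fun a => f a b)).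

Definition is_tensor_product (A B T : lmodType rat) (t : A -> B -> T) : Prop :=
  qbilinear t /\
  forall (W : lmodType rat) (f : A -> B -> W), qbilinear f ->
    exists h : T -> W, qlinear h /\ (forall a b, h (t a b) = f a b) /\
      forall h' : T -> W, qlinear h' -> (forall a b, h' (t a b) = f a b) ->
        forall x, h' x = h x.

Definition diagonal_action (G : group) (A B T : lmodType rat)
    (actA : G -> A -> A) (actB : G -> B -> B) (t : A -> B -> T)
    (actT : G -> T -> T) : Prop :=
  forall g, qlinear (actT g) /\
    forall a b, actT g (t a b) = t (actA g a) (actB g b).

(* Hom_Q(A,B) = the Q-linear maps inside the Q-vector space of all maps A -> B
   (pointwise structure), with the conjugation action (g.f)(a) = g (f (g^-1 a)). *)
Definition Hom_set (A B : lmodType rat) : (A -> B) -> Prop := fun f => qlinear f.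

Definition conj_action (G : group) (A B : lmodType rat)
    (actA : G -> A -> A) (actB : G -> B -> B) : G -> (A -> B) -> (A -> B) :=
  fun g f => fun a => actB g (f (actA (ginv g) a)).

Definition setT_ (V : Type) : V -> Prop := fun _ => True.

Definition finite_pred (T : Type) (P : T -> Prop) : Prop :=
  exists (n : nat) (f : 'I_n -> T), forall x, P x -> exists i, f i = x.

From HB Require Import structures.
From mathcomp Require Import all_boot all_order all_algebra.
From mathcomp Require Import boolp functions.
From mathcomp Require Import zify.
Set Implicit Arguments. Unset Strict Implicit. Unset Printing Implicit Defensive.
Import GRing.Theory.
Local Open Scope ring_scope.

(* Let F^A, F^B be filtrations on whose graded pieces iota acts by the signs
   e_A, e_B.  If a lies in F^A_i and b in F^B_j, then iota a = e_A a + a' and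
   iota b = e_B b + b' with a' in F^A_(i-1) and b' in F^B_(j-1), so
   iota (a (x) b) - e_A e_B a (x) b = e_A a (x) b' + e_B a' (x) b + a' (x) b'
   lies one step lower in the filtration of A (x) B spanned by the
   F^A_i (x) F^B_j with i + j <= n.  Likewise iota acts by e_A e_B on the
   graded pieces of the filtration of Hom(A, B) by
   D_n = {f | f(F^A_i) <= F^B_(i+n-K)}, K the length of F^A. *)

Section QLinear.
Variables U V W : lmodType rat.
Implicit Type f : U -> V.

Lemma qlinear0 f : qlinear f -> f 0 = 0.
Proof. by move=> fl; have := fl (-1) 0 0; rewrite scaler0 addr0 scaleN1r addNr. Qed.

Lemma qlinearD f : qlinear f -> forall u v, f (u + v) = f u + f v.
Proof. by move=> fl u v; have := fl 1 u v; rewrite !scale1r. Qed.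

Lemma qlinearZ f : qlinear f -> forall a u, f (a *: u) = a *: f u.
Proof. by move=> fl a u; have := fl a u 0; rewrite addr0 (qlinear0 fl) addr0. Qed.

Lemma qlinear_id : qlinear (@id U). Proof. by []. Qed.

Lemma qlinear_zero : qlinear (fun _ : U => 0 : V).
Proof. by move=> a u v; rewrite scaler0 addr0. Qed.

Lemma qlinear_comp f (g : V -> W) : qlinear f -> qlinear g -> qlinear (g \o f).
Proof. by move=> fl gl a u v /=; rewrite fl gl. Qed.

Lemma qlinear_add f g : qlinear f -> qlinear g -> qlinear (fun u => f u + g u).
Proof. by move=> fl gl a u v; rewrite fl gl scalerDr addrACA. Qed.

Lemma qlinear_sub f g : qlinear f -> qlinear g -> qlinear (fun u => f u - g u).
Proof. by move=> fl gl a u v; rewrite fl gl scalerBr opprD addrACA. Qed.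

Lemma qlinear_scale f c : qlinear f -> qlinear (fun u => c *: f u).
Proof. by move=> fl a u v; rewrite fl scalerDr !scalerA mulrC. Qed.

End QLinear.

Lemma qbilinear_expand (A B W : lmodType rat) (f : A -> B -> W) c d a a' b b' :
  qbilinear f ->
  f (c *: a + a') (d *: b + b') =
    (c * d) *: f a b + (c *: f a b' + d *: f a' b + f a' b').
Proof.
case=> fl fr; rewrite (fr _ c a a') (fl a d b b') (fl a' d b b').
by rewrite scalerDr scalerA !addrA.
Qed.

Lemma gmulxV (G : group) (x : G) : gmul x (ginv x) = gone G.
Proof.
rewrite -[gmul x _]gmul1 -[in gmul _ (gmul x _)](gmulV (ginv x)).
by rewrite -gmulA (gmulA (ginv x)) gmulV gmul1 gmulV.
Qed.

Lemma actVK (G : group) (V : lmodType rat) (act : G -> V -> V) g v :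
  is_QGaction act -> act g (act (ginv g) v) = v.
Proof. by case=> _ act1 actM; rewrite -actM gmulxV act1. Qed.

Section Submodule.
Variables (G : group) (V : lmodType rat) (act : G -> V -> V) (S : V -> Prop).
Hypothesis hS : is_QGsubmod act S.

Lemma submod0 : S 0. Proof. by case: hS. Qed.
Lemma submodD u v : S u -> S v -> S (u + v). Proof. by case: hS => _ + _ _; apply. Qed.
Lemma submodZ a v : S v -> S (a *: v). Proof. by case: hS => _ _ + _; apply. Qed.
Lemma submod_act g v : S v -> S (act g v). Proof. by case: hS => _ _ _; apply. Qed.

Lemma submodN v : S v -> S (- v).
Proof. by rewrite -scaleN1r; apply: submodZ. Qed.

Lemma submodB u v : S u -> S v -> S (u - v).
Proof. by move=> Su /submodN; apply: submodD. Qed.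

End Submodule.

Section Filtration.
Variables (G : group) (iota : G) (V : lmodType rat) (act : G -> V -> V).

Definition parity_filtration (F : nat -> V -> Prop) (o : bool) : Prop :=
  [/\ forall n, is_QGsubmod act (F n),
      forall v, F 0 v -> v = 0,
      forall n v, F n v -> F n.+1 v
    & forall n v, F n.+1 v -> F n (act iota v - (-1) ^+ o *: v)].

Lemma parity_filtration_mono F o : parity_filtration F o ->
  forall m n v, (m <= n)%N -> F m v -> F n v.
Proof.
case=> _ _ Fstep _ m n v mn.
apply: (homo_leq (r := fun P Q : V -> Prop => forall v, P v -> Q v)) => //.
by move=> P Q R PQ QR x /PQ /QR.
Qed.

Lemma gr_parityP (M : V -> Prop) o :
  gr_parity iota act M o <->
  exists k F, parity_filtration F o /\ forall v, F k v <-> M v.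
Proof.
have sign_term (v : V) : (if o then v else - v) = - ((-1) ^+ o *: v).
  by rewrite scaler_sign; case: o; rewrite ?opprK.
split=> [[k [F [Fsub F0 Fstep Fk Fpar]]] | [k [F [[Fsub F0 Fstep Fpar] Fk]]]].
  exists k, (fun n => F (minn n k)); split; last by move=> v; rewrite minnn.
  split=> [n | v | n v | n v] /=.
  - by apply: Fsub; apply: geq_minr.
  - by rewrite min0n => /F0.
  - case: (ltnP n k) => [nk | kn].
      by rewrite (minn_idPl nk); apply: Fstep.
    by rewrite (minn_idPr _) // leqW.
  case: (ltnP n k) => [nk | kn].
    by rewrite (minn_idPl nk) -sign_term; apply: Fpar.
  rewrite (minn_idPr _) ?leqW // => Fv.
  have Fk_sub := Fsub k (leqnn k).
  by apply: (submodB Fk_sub); [apply: (submod_act Fk_sub) | apply: (submodZ Fk_sub)].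
exists k, F; split=> [n _ | v | n v _ | // | n v _].
- exact: Fsub.
- by split=> [/F0 // | ->]; apply: submod0 (Fsub 0%N).
- exact: Fstep.
- by rewrite sign_term; apply: Fpar.
Qed.

End Filtration.

(* Spans are encoded by double annihilators: [x] lies in the span of [S] iff
   every linear map killing [S] kills [x].  This avoids finite linear
   combinations altogether. *)
Definition qspan (V : lmodType rat) (S : V -> Prop) (x : V) : Prop :=
  forall (W : lmodType rat) (h : V -> W),
    qlinear h -> (forall y, S y -> h y = 0) -> h x = 0.

Section Span.
Variable V : lmodType rat.
Implicit Types S : V -> Prop.

Lemma qspan_subset S x : S x -> qspan S x.
Proof. by move=> Sx W h _; apply. Qed.

Lemma qspan0 S : qspan S 0.
Proof. by move=> W h hl _; rewrite qlinear0. Qed.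

Lemma qspanD S u v : qspan S u -> qspan S v -> qspan S (u + v).
Proof. by move=> Su Sv W h hl hS; rewrite (qlinearD hl) Su // Sv // addr0. Qed.

Lemma qspanZ S a v : qspan S v -> qspan S (a *: v).
Proof. by move=> Sv W h hl hS; rewrite (qlinearZ hl) Sv // scaler0. Qed.

Lemma qspan_linear_image S (V' : lmodType rat) (S' : V' -> Prop) (phi : V -> V') :
  qlinear phi -> (forall y, S y -> qspan S' (phi y)) ->
  forall x, qspan S x -> qspan S' (phi x).
Proof.
move=> phil phiS x Sx W h hl hS'.
by apply: (Sx W (h \o phi)) => [|y /phiS]; [apply: qlinear_comp | apply].
Qed.

Lemma qspan_mono S S' :
  (forall y, S y -> S' y) -> forall x, qspan S x -> qspan S' x.
Proof.
move=> SS'; apply: (qspan_linear_image (@qlinear_id V)) => y /SS'.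
exact: qspan_subset.
Qed.

Lemma qspan_eq0 S x : (forall y, S y -> y = 0) -> qspan S x -> x = 0.
Proof. by move=> S0 Sx; apply: (Sx V id). Qed.

Lemma qspan_submod S (G : group) (act : G -> V -> V) :
  (forall g, qlinear (act g)) -> (forall g y, S y -> S (act g y)) ->
  is_QGsubmod act (qspan S).
Proof.
move=> actl actS; split; [exact: qspan0 | exact: qspanD | exact: qspanZ |].
move=> g; apply: qspan_linear_image => // y Sy.
exact/qspan_subset/actS.
Qed.

End Span.

Lemma qspan_pure_tensors (A B T : lmodType rat) (t : A -> B -> T) (S : T -> Prop) x :
  is_tensor_product t -> (forall a b, S (t a b)) -> qspan S x.
Proof.
move=> [_ t_universal] St W h hl hS.
have bil0 : qbilinear (fun (_ : A) (_ : B) => 0 : W) by split=> ?; apply: qlinear_zero.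
have [h0 [_ [_ h0_unique]]] := t_universal W _ bil0.
rewrite (h0_unique h hl (fun a b => hS _ (St a b))).
by rewrite -(h0_unique _ (@qlinear_zero T W)).
Qed.

Section TensorFiltration.
Variables (G : group) (iota : G) (A B T : lmodType rat).
Variables (actA : G -> A -> A) (actB : G -> B -> B).
Variables (t : A -> B -> T) (actT : G -> T -> T).
Hypotheses (Ht : is_tensor_product t) (HT : diagonal_action actA actB t actT).
Variables (FA : nat -> A -> Prop) (FB : nat -> B -> Prop) (oA oB : bool).
Hypotheses (HFA : parity_filtration iota actA FA oA)
           (HFB : parity_filtration iota actB FB oB).

Definition tensor_generators n (y : T) : Prop :=
  exists i j a b, [/\ (i + j <= n)%N, FA i a, FB j b & y = t a b].

Definition tensor_filtration n : T -> Prop := qspan (tensor_generators n).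

Lemma tensor_generators_parity n y : tensor_generators n.+1 y ->
  tensor_filtration n (actT iota y - (-1) ^+ (oA (+) oB) *: y).
Proof.
have [[tl tr] _] := Ht; have [_ FA0 _ FApar] := HFA; have [_ FB0 _ FBpar] := HFB.
have iota_lin := (HT iota).1.
move=> [i [j [a [b [ij FAa FBb ->]]]]].
case: i ij FAa => [|i] ij FAa.
  rewrite (FA0 a FAa) (qlinear0 (tr b)) (qlinear0 iota_lin) scaler0 subr0.
  exact: qspan0.
case: j ij FBb => [|j] ij FBb.
  rewrite (FB0 b FBb) (qlinear0 (tl a)) (qlinear0 iota_lin) scaler0 subr0.
  exact: qspan0.
set a' := actA iota a - (-1) ^+ oA *: a; set b' := actB iota b - (-1) ^+ oB *: b.
have FAa' : FA i a' by apply: FApar.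
have FBb' : FB j b' by apply: FBpar.
have iota_a : actA iota a = (-1) ^+ oA *: a + a' by rewrite addrC subrK.
have iota_b : actB iota b = (-1) ^+ oB *: b + b' by rewrite addrC subrK.
rewrite (HT iota).2 iota_a iota_b qbilinear_expand // signr_addb addrAC subrr add0r.
apply: qspanD; first apply: qspanD; try apply: qspanZ; apply: qspan_subset.
- by exists i.+1, j, a, b'; split=> //; lia.
- by exists i, j.+1, a', b; split=> //; lia.
- by exists i, j, a', b'; split=> //; lia.
Qed.

Lemma tensor_filtration_parity :
  parity_filtration iota actT tensor_filtration (oA (+) oB).
Proof.
have [[_ tr] _] := Ht; have [FAsub FA0 _ _] := HFA; have [FBsub _ _ _] := HFB.
split=> [n | y | n y | n].
- apply: qspan_submod => [g | g y [i [j [a [b [ij FAa FBb ->]]]]]].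
    exact: (HT g).1.
  rewrite (HT g).2; exists i, j, (actA g a), (actB g b).
  by split=> //; [apply: (submod_act (FAsub i)) | apply: (submod_act (FBsub j))].
- apply: qspan_eq0 => _ [[|i] [[|j] [a [b [ij FAa FBb ->]]]]] //.
  by rewrite (FA0 a FAa) (qlinear0 (tr b)).
- apply: qspan_mono => _ [i [j [a [b [ij FAa FBb ->]]]]].
  by exists i, j, a, b; split=> //; apply: leqW.
- apply: qspan_linear_image; last exact: tensor_generators_parity.
  by apply: qlinear_sub; [apply: (HT iota).1 | apply: qlinear_scale].
Qed.

Lemma tensor_filtration_full kA kB :
  (forall a, FA kA a) -> (forall b, FB kB b) -> forall y, tensor_filtration (kA + kB) y.
Proof.
move=> FAk FBk y; apply: (qspan_pure_tensors _ Ht) => a b.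
by exists kA, kB, a, b.
Qed.

End TensorFiltration.

Lemma tensor_gr_parity (G : group) (iota : G) (A B T : lmodType rat)
    (actA : G -> A -> A) (actB : G -> B -> B) (t : A -> B -> T) (actT : G -> T -> T)
    (oA oB : bool) :
  is_tensor_product t -> diagonal_action actA actB t actT ->
  gr_parity iota actA (@setT_ A) oA -> gr_parity iota actB (@setT_ B) oB ->
  gr_parity iota actT (@setT_ T) (oA (+) oB).
Proof.
move=> Ht HT /gr_parityP [kA [FA [HFA FAk]]] /gr_parityP [kB [FB [HFB FBk]]].
apply/gr_parityP; exists (kA + kB)%N, (tensor_filtration t FA FB).
split; first exact: tensor_filtration_parity.
move=> y; split=> // _.
by apply: tensor_filtration_full => // [a | b]; [apply/FAk | apply/FBk].
Qed.

Section HomFiltration.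
Variables (G : group) (iota : G) (A B : lmodType rat).
Variables (actA : G -> A -> A) (actB : G -> B -> B).
Hypotheses (HA : is_QGaction actA) (HB : is_QGaction actB).
Variables (FA : nat -> A -> Prop) (FB : nat -> B -> Prop) (oA oB : bool) (K : nat).
Hypotheses (HFA : parity_filtration iota actA FA oA)
           (HFB : parity_filtration iota actB FB oB).
Hypothesis FAK : forall a, FA K a.

Definition hom_filtration n (f : A -> B) : Prop :=
  qlinear f /\ forall i a, FA i a -> FB (i + n - K) (f a).

Lemma conj_action_qlinear g f : qlinear f -> qlinear (conj_action actA actB g f).
Proof.
have [actAl _ _] := HA; have [actBl _ _] := HB.
by move=> fl; do 2![apply: qlinear_comp => //].
Qed.

Lemma hom_filtration_parity_step n f : hom_filtration n.+1 f ->
  hom_filtration n (fun a => conj_action actA actB iota f a - (-1) ^+ (oA (+) oB) *: f a).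
Proof.
have [FAsub FA0 _ FApar] := HFA; have [FBsub _ _ FBpar] := HFB.
have [actAl _ _] := HA; have [actBl _ _] := HB.
move=> [fl fF]; split=> [|i a FAa].
  by apply: qlinear_sub; [apply: conj_action_qlinear | apply: qlinear_scale].
rewrite /conj_action -[X in _ *: f X](@actVK _ _ actA iota a HA).
set a0 := actA (ginv iota) a.
have {FAa}FAa0 : FA i a0 by apply: (submod_act (FAsub i)).
case: i FAa0 => [|i] FAa0.
  rewrite (FA0 a0 FAa0) (qlinear0 (actAl _)) !(qlinear0 fl) (qlinear0 (actBl _)).
  by rewrite scaler0 subr0; apply: submod0 (FBsub _).
set x := actA iota a0 - (-1) ^+ oA *: a0.
set y := actB iota (f a0) - (-1) ^+ oB *: f a0.
have FAx : FA i x by apply: FApar.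
have FBy : FB (i.+1 + n - K) y.
  apply: FBpar; apply: (parity_filtration_mono HFB _ (fF _ _ FAa0)); lia.
have FBfx : FB (i.+1 + n - K) (f x) by rewrite addSnnS; apply: fF.
have -> : actA iota a0 = (-1) ^+ oA *: a0 + x by rewrite addrC subrK.
have -> : actB iota (f a0) = (-1) ^+ oB *: f a0 + y by rewrite addrC subrK.
rewrite (qlinearD fl) (qlinearZ fl) scalerDr scalerA signr_addb mulrAC -mulrA signrMK.
rewrite opprD addrACA subrr add0r.
by apply: (submodB (FBsub _)) => //; apply: (submodZ (FBsub _)).
Qed.

Lemma hom_filtration_parity :
  parity_filtration iota (conj_action actA actB) hom_filtration (oA (+) oB).
Proof.
have [FAsub _ _ _] := HFA; have [FBsub FB0 _ _] := HFB.
split=> [n | f [_ fF] | n f [fl fF] | n f]; last exact: hom_filtration_parity_step.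
- split=> [|f g [fl fF] [gl gF] | c f [fl fF] | g f [fl fF]].
  + by split=> [|i a _]; [apply: qlinear_zero | apply: submod0 (FBsub _)].
  + split=> [|i a FAa]; first exact: qlinear_add.
    by apply: (submodD (FBsub _)); [apply: fF | apply: gF].
  + split=> [|i a FAa]; first exact: qlinear_scale.
    by apply: (submodZ (FBsub _)); apply: fF.
  + split=> [|i a FAa]; first exact: conj_action_qlinear.
    apply: (submod_act (FBsub _)); apply: fF.
    exact: (submod_act (FAsub _)).
- by apply/funext => a; apply: FB0; have := fF K a (FAK a); rewrite addn0 subnn.
- split=> // i a /fF; apply: (parity_filtration_mono HFB); lia.
Qed.

Lemma hom_filtration_full kB :
  (forall b, FB kB b) -> forall f, hom_filtration (K + kB) f <-> Hom_set f.
Proof.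
move=> FBk f; split=> [[] // | fl]; split=> // i a _.
by apply: (parity_filtration_mono HFB _ (FBk _)); lia.
Qed.

End HomFiltration.

Lemma hom_gr_parity (G : group) (iota : G) (A B : lmodType rat)
    (actA : G -> A -> A) (actB : G -> B -> B) (oA oB : bool) :
  is_QGaction actA -> is_QGaction actB ->
  gr_parity iota actA (@setT_ A) oA -> gr_parity iota actB (@setT_ B) oB ->
  gr_parity iota (conj_action actA actB) (@Hom_set A B) (oA (+) oB).
Proof.
move=> HA HB /gr_parityP [kA [FA [HFA FAk]]] /gr_parityP [kB [FB [HFB FBk]]].
have FAkA a : FA kA a by apply/FAk.
apply/gr_parityP; exists (kA + kB)%N, (hom_filtration FA FB kA).
split; first exact: (hom_filtration_parity HA HB HFA HFB FAkA).
by apply: (hom_filtration_full FA kA HFB) => b; apply/FBk.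
Qed.

Theorem proposition3p4p4
  (G : group) (iota : G) (L : G -> Prop)
  (HL1 : L (gone G))
  (HLM : forall x y, L x -> L y -> L (gmul x y))
  (HLV : forall x, L x -> L (ginv x))
  (HLnormal : forall g x, L x -> L (gmul (gmul g x) (ginv g)))
  (HLfinite : finite_pred L)
  (Hcentral : forall g, L (gmul (gmul iota g) (gmul (ginv iota) (ginv g))))
  (A B : lmodType rat) (actA : G -> A -> A) (actB : G -> B -> B)
  (HA : is_QGaction actA) (HB : is_QGaction actB)
  (T : lmodType rat) (t : A -> B -> T) (actT : G -> T -> T)
  (Ht : is_tensor_product t) (HT : diagonal_action actA actB t actT) :
  (gr_odd iota actA (@setT_ A) ->
     (gr_odd iota actB (@setT_ B) ->
        gr_even iota actT (@setT_ T) /\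
        gr_even iota (conj_action actA actB) (@Hom_set A B)) /\
     (gr_even iota actB (@setT_ B) ->
        gr_odd iota actT (@setT_ T) /\
        gr_odd iota (conj_action actA actB) (@Hom_set A B))) /\
  (gr_even iota actA (@setT_ A) ->
     (gr_odd iota actB (@setT_ B) ->
        gr_odd iota actT (@setT_ T) /\
        gr_odd iota (conj_action actA actB) (@Hom_set A B)) /\
     (gr_even iota actB (@setT_ B) ->
        gr_even iota actT (@setT_ T) /\
        gr_even iota (conj_action actA actB) (@Hom_set A B))).
Proof.
have parity oA oB :
    gr_parity iota actA (@setT_ A) oA -> gr_parity iota actB (@setT_ B) oB ->
    gr_parity iota actT (@setT_ T) (oA (+) oB) /\
    gr_parity iota (conj_action actA actB) (@Hom_set A B) (oA (+) oB).
  move=> hA hB; split; first exact: tensor_gr_parity Ht HT hA hB.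
  exact: hom_gr_parity HA HB hA hB.
split=> hA; split=> hB.
- exact: (parity true true).
- exact: (parity true false).
- exact: (parity false true).
- exact: (parity false false).
Qed.
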